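(* Every formula of $\mathcal{L}(\Rightarrow)$ is provably equivalent in the Yalcin logic to a formula of $\mathcal{L}$; that is, for every $\varphi\in\mathcal{L}(\Rightarrow)$ there is $\varphi'\in\mathcal{L}$ such that $\varphi\leftrightarrow\varphi'$ is a theorem of the Yalcin logic.
   Context: The language $\mathcal{L}(\Rightarrow)$ is given by $\varphi::= p\mid \neg\varphi\mid (\varphi\wedge\varphi)\mid \Box\varphi \mid (\varphi\Rightarrow\varphi)$, with $p$ ranging over a fixed set of propositional variables; $\vee,\to,\leftrightarrow,\bot$ as usual and $\Diamond\varphi:=\neg\Box\neg\varphi$. $\mathcal{L}$ is the set of formulas not containing $\Rightarrow$. A formula is nonmodal if it contains neither $\Rightarrow$ nor $\Box$. The Yalcin logic is the smallest set of formulas of $\mathcal{L}(\Rightarrow)$ closed under replacement of equivalents (if $\alpha\leftrightarrow\beta$ is in the set and $\varphi'$ results from $\varphi$ by replacing an occurrence of $\alpha$ by $\beta$, then $\varphi\leftrightarrow\varphi'$ is in the set), modus ponens for $\to$, and necessitation for $\Box$, and containing all substitution instances of propositional tautologies and all instances of: K: $\Box(\varphi\to\psi)\to(\Box\varphi\to\Box\psi)$; 4: $\Diamond\Diamond\varphi\to\Diamond\varphi$; 5: $\Diamond\Box\varphi\to\Box\varphi$; I1: $(\varphi\Rightarrow\pi)\leftrightarrow\Box(\varphi\to\pi)$ for $\pi$ nonmodal; I2: $(\varphi\Rightarrow(\alpha\wedge\beta))\leftrightarrow((\varphi\Rightarrow\alpha)\wedge(\varphi\Rightarrow\beta))$; I3: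 $(\varphi\Rightarrow\alpha)\to(\varphi\Rightarrow(\alpha\vee\beta))$; I4: $(\varphi\Rightarrow\alpha)\to(\varphi\Rightarrow\Box\alpha)$; I5: $((\varphi\Rightarrow(\alpha\vee\Box\beta))\wedge\neg(\varphi\Rightarrow\beta))\to(\varphi\Rightarrow\alpha)$; I6: $((\varphi\Rightarrow(\alpha\vee\Diamond\beta))\wedge(\varphi\Rightarrow\neg\beta))\to(\varphi\Rightarrow\alpha)$; I7: $\neg(\varphi\Rightarrow\beta)\to(\varphi\Rightarrow\Diamond\neg\beta)$. *)

From Stdlib Require Import Bool.

Set Implicit Arguments.

Inductive form (V : Type) : Type :=
| Var  : V -> form V
| Neg  : form V -> form V
| And  : form V -> form V -> form V
| Box  : form V -> form V
| Cond : form V -> form V -> form V.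

Arguments Var {V} _.
Arguments Neg {V} _.
Arguments And {V} _ _.
Arguments Box {V} _.
Arguments Cond {V} _ _.

Section Derived.
Variable V : Type.
Definition Or  (a b : form V) : form V := Neg (And (Neg a) (Neg b)).
Definition Imp (a b : form V) : form V := Neg (And a (Neg b)).
Definition Iff (a b : form V) : form V := And (Imp a b) (Imp b a).
Definition Dia (a : form V) : form V := Neg (Box (Neg a)).

Fixpoint in_L (a : form V) : Prop :=
  match a with
  | Var _ => True
  | Neg b => in_L b
  | And b c => in_L b /\ in_L c
  | Box b => in_L b
  | Cond _ _ => False
  end.

Fixpoint nonmodal (a : form V) : Prop :=
  match a with
  | Var _ => True
  | Neg b => nonmodal b
  | And b c => nonmodal b /\ nonmodal c
  | Box _ => False
  | Cond _ _ => False
  end.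

Fixpoint peval (v : form V -> bool) (a : form V) : bool :=
  match a with
  | Var _ => v a
  | Neg b => negb (peval v b)
  | And b c => peval v b && peval v c
  | Box _ => v a
  | Cond _ _ => v a
  end.

(* Substitution instances of propositional tautologies: formulas true under every
   Boolean valuation of their maximal non-Boolean subformulas. *)
Definition taut_instance (a : form V) : Prop := forall v, peval v a = true.

Inductive repl (a b : form V) : form V -> form V -> Prop :=
| repl_here : repl a b a b
| repl_neg  : forall p p', repl a b p p' -> repl a b (Neg p) (Neg p')
| repl_andl : forall p p' q, repl a b p p' -> repl a b (And p q) (And p' q)
| repl_andr : forall p q q', repl a b q q' -> repl a b (And p q) (And p q')
| repl_box  : forall p p', repl a b p p' -> repl a b (Box p) (Box p')
| repl_condl : forall p p' q, repl a b p p' -> repl a b (Cond p q) (Cond p' q)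
| repl_condr : forall p q q', repl a b q q' -> repl a b (Cond p q) (Cond p q').

Inductive yalcin : form V -> Prop :=
| Y_taut : forall a, taut_instance a -> yalcin a
| Y_K : forall a b, yalcin (Imp (Box (Imp a b)) (Imp (Box a) (Box b)))
| Y_4 : forall a, yalcin (Imp (Dia (Dia a)) (Dia a))
| Y_5 : forall a, yalcin (Imp (Dia (Box a)) (Box a))
| Y_I1 : forall a p, nonmodal p -> yalcin (Iff (Cond a p) (Box (Imp a p)))
| Y_I2 : forall f a b, yalcin (Iff (Cond f (And a b)) (And (Cond f a) (Cond f b)))
| Y_I3 : forall f a b, yalcin (Imp (Cond f a) (Cond f (Or a b)))
| Y_I4 : forall f a, yalcin (Imp (Cond f a) (Cond f (Box a)))
| Y_I5 : forall f a b,
    yalcin (Imp (And (Cond f (Or a (Box b))) (Neg (Cond f b))) (Cond f a))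
| Y_I6 : forall f a b,
    yalcin (Imp (And (Cond f (Or a (Dia b))) (Cond f (Neg b))) (Cond f a))
| Y_I7 : forall f b, yalcin (Imp (Neg (Cond f b)) (Cond f (Dia (Neg b))))
| Y_MP : forall a b, yalcin (Imp a b) -> yalcin a -> yalcin b
| Y_Nec : forall a, yalcin a -> yalcin (Box a)
| Y_RE : forall a b p p', yalcin (Iff a b) -> repl a b p p' -> yalcin (Iff p p').
End Derived.

From Stdlib Require Import Bool List Lia Wf_nat.

Set Implicit Arguments.

(* It suffices to eliminate a single [f => psi] with [f] and [psi] in L: the
   other connectives are handled by replacement of equivalents.  Write [psi]
   as a disjunction of signed formulas (a clause) closed by a nonmodal tail
   and take the clause apart literal by literal: Boolean connectives are
   unfolded by tautologies and I2, nonmodal atoms join the tail, and a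
   literal [Box a] or [~ Box a] is split off by the derived laws
     (f => (Box a \/ R)) <-> (f => a) \/ (f => R),
     (f => (~Box a \/ R)) <-> ~(f => a) \/ (f => R).
   When only the nonmodal tail [pi] is left, I1 turns [f => pi] into
   [Box (f -> pi)].  Every step lowers the total size of the literals. *)

Section YalcinElimination.
Variable V : Type.
Implicit Types a b c f p psi R : form V.

Lemma yalcin_taut_mp1 a b : taut_instance (Imp a b) -> yalcin a -> yalcin b.
Proof. intros H Ha; exact (Y_MP (Y_taut H) Ha). Qed.

Lemma yalcin_taut_mp2 a b c :
  taut_instance (Imp a (Imp b c)) -> yalcin a -> yalcin b -> yalcin c.
Proof. intros H Ha Hb; exact (Y_MP (Y_MP (Y_taut H) Ha) Hb). Qed.

Lemma yalcin_taut_mp3 a b c (d : form V) :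
  taut_instance (Imp a (Imp b (Imp c d))) ->
  yalcin a -> yalcin b -> yalcin c -> yalcin d.
Proof. intros H Ha Hb Hc; exact (Y_MP (Y_MP (Y_MP (Y_taut H) Ha) Hb) Hc). Qed.

Ltac taut :=
  let v := fresh "v" in
  intro v; simpl;
  repeat match goal with
  | |- context [?w ?x] =>
      lazymatch type of w with form _ -> bool => destruct (w x) end
  end;
  reflexivity.

Lemma yalcin_iff_refl a : yalcin (Iff a a).
Proof. apply Y_taut; taut. Qed.

Lemma yalcin_iff_trans a b c :
  yalcin (Iff a b) -> yalcin (Iff b c) -> yalcin (Iff a c).
Proof. apply yalcin_taut_mp2; taut. Qed.

Lemma yalcin_iff_cond_r f a b :
  yalcin (Iff a b) -> yalcin (Iff (Cond f a) (Cond f b)).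
Proof. intro H; exact (Y_RE H (repl_condr f (repl_here a b))). Qed.

Lemma yalcin_iff_cond_r_taut f a b :
  taut_instance (Iff a b) -> yalcin (Iff (Cond f a) (Cond f b)).
Proof. intro H; apply yalcin_iff_cond_r, Y_taut, H. Qed.

Lemma cond_or_box f a R :
  yalcin (Iff (Cond f (Or (Box a) R)) (Or (Cond f a) (Cond f R))).
Proof.
  assert (comm : yalcin (Iff (Cond f (Or (Box a) R)) (Cond f (Or R (Box a)))))
    by (apply yalcin_iff_cond_r_taut; taut).
  assert (I5 := Y_I5 f R a).
  assert (I4 := Y_I4 f a).
  assert (I3_box := Y_I3 f (Box a) R).
  assert (I3_R := Y_I3 f R (Box a)).
  assert (to : yalcin (Imp (Cond f (Or (Box a) R)) (Or (Cond f a) (Cond f R))))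
    by (revert comm I5; apply yalcin_taut_mp2; taut).
  assert (from_a : yalcin (Imp (Cond f a) (Cond f (Or (Box a) R))))
    by (revert I4 I3_box; apply yalcin_taut_mp2; taut).
  assert (from_R : yalcin (Imp (Cond f R) (Cond f (Or (Box a) R))))
    by (revert comm I3_R; apply yalcin_taut_mp2; taut).
  revert to from_a from_R; apply yalcin_taut_mp3; taut.
Qed.

(* [~ Box a] is [Dia (~ a)] up to the double negation inside the box, which
   brings I6 and I7 (with [b := ~ a]) into play. *)
Lemma cond_or_neg_box f a R :
  yalcin (Iff (Cond f (Or (Neg (Box a)) R)) (Or (Neg (Cond f a)) (Cond f R))).
Proof.
  assert (dneg : yalcin (Iff (Box a) (Box (Neg (Neg a))))).
  { apply (Y_RE (a := a) (b := Neg (Neg a))); [apply Y_taut; taut|].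
    apply repl_box, repl_here. }
  assert (to_dia_r :
    yalcin (Iff (Cond f (Or (Neg (Box a)) R)) (Cond f (Or R (Dia (Neg a)))))).
  { apply yalcin_iff_cond_r; revert dneg; apply yalcin_taut_mp1; unfold Dia; taut. }
  assert (to_dia_l :
    yalcin (Iff (Cond f (Or (Neg (Box a)) R)) (Cond f (Or (Dia (Neg a)) R)))).
  { apply yalcin_iff_cond_r; revert dneg; apply yalcin_taut_mp1; unfold Dia; taut. }
  assert (cond_dneg : yalcin (Iff (Cond f a) (Cond f (Neg (Neg a)))))
    by (apply yalcin_iff_cond_r_taut; taut).
  assert (I6 := Y_I6 f R (Neg a)).
  assert (I7 := Y_I7 f a).
  assert (I3_dia := Y_I3 f (Dia (Neg a)) R).
  assert (I3_R := Y_I3 f R (Dia (Neg a))).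
  assert (to :
    yalcin (Imp (Cond f (Or (Neg (Box a)) R)) (Or (Neg (Cond f a)) (Cond f R))))
    by (revert to_dia_r cond_dneg I6; apply yalcin_taut_mp3; taut).
  assert (from_neg : yalcin (Imp (Neg (Cond f a)) (Cond f (Or (Neg (Box a)) R))))
    by (revert I7 I3_dia to_dia_l; apply yalcin_taut_mp3; taut).
  assert (from_R : yalcin (Imp (Cond f R) (Cond f (Or (Neg (Box a)) R))))
    by (revert to_dia_r I3_R; apply yalcin_taut_mp2; taut).
  revert to from_neg from_R; apply yalcin_taut_mp3; taut.
Qed.

Definition L_equiv (phi : form V) : Prop :=
  exists phi', in_L phi' /\ yalcin (Iff phi phi').

Lemma nonmodal_in_L a : nonmodal a -> in_L a.
Proof. induction a; simpl; tauto. Qed.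

Lemma L_equiv_in_L a : in_L a -> L_equiv a.
Proof. intro Ha; exists a; split; [exact Ha | apply yalcin_iff_refl]. Qed.

Lemma L_equiv_neg a : L_equiv a -> L_equiv (Neg a).
Proof.
  intros [a' [Ha Ya]]; exists (Neg a'); split; [exact Ha|].
  exact (Y_RE Ya (repl_neg (repl_here _ _))).
Qed.

Lemma L_equiv_and a b : L_equiv a -> L_equiv b -> L_equiv (And a b).
Proof.
  intros [a' [Ha Ya]] [b' [Hb Yb]]; exists (And a' b'); split; [simpl; tauto|].
  revert Ya Yb; apply yalcin_taut_mp2; taut.
Qed.

Lemma L_equiv_box a : L_equiv a -> L_equiv (Box a).
Proof.
  intros [a' [Ha Ya]]; exists (Box a'); split; [exact Ha|].
  exact (Y_RE Ya (repl_box (repl_here _ _))).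
Qed.

Lemma L_equiv_cond_taut f a b :
  taut_instance (Iff a b) -> L_equiv (Cond f b) -> L_equiv (Cond f a).
Proof.
  intros H [chi [Hchi Ychi]]; exists chi; split; [exact Hchi|].
  exact (yalcin_iff_trans (yalcin_iff_cond_r_taut f H) Ychi).
Qed.

Lemma L_equiv_cond_nonmodal f p :
  in_L f -> nonmodal p -> L_equiv (Cond f p).
Proof.
  intros Hf Hp; exists (Box (Imp f p)); split.
  - simpl; split; [exact Hf | apply nonmodal_in_L, Hp].
  - apply Y_I1, Hp.
Qed.

Lemma L_equiv_cond_and f a b :
  L_equiv (Cond f a) -> L_equiv (Cond f b) -> L_equiv (Cond f (And a b)).
Proof.
  intros [ca [Ha Ya]] [cb [Hb Yb]]; exists (And ca cb); split; [simpl; tauto|].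
  apply (yalcin_iff_trans (Y_I2 f a b)); revert Ya Yb; apply yalcin_taut_mp2; taut.
Qed.

Lemma L_equiv_cond_or_box f a R :
  L_equiv (Cond f a) -> L_equiv (Cond f R) -> L_equiv (Cond f (Or (Box a) R)).
Proof.
  intros [ca [Ha Ya]] [cR [HR YR]]; exists (Or ca cR); split; [simpl; tauto|].
  apply (yalcin_iff_trans (cond_or_box f a R)); revert Ya YR; apply yalcin_taut_mp2; taut.
Qed.

Lemma L_equiv_cond_or_neg_box f a R :
  L_equiv (Cond f a) -> L_equiv (Cond f R) ->
  L_equiv (Cond f (Or (Neg (Box a)) R)).
Proof.
  intros [ca [Ha Ya]] [cR [HR YR]]; exists (Or (Neg ca) cR); split; [simpl; tauto|].
  apply (yalcin_iff_trans (cond_or_neg_box f a R)); revert Ya YR; apply yalcin_taut_mp2; taut.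
Qed.

Definition literal (l : bool * form V) : form V :=
  let (b, a) := l in if b then a else Neg a.

Fixpoint clause p (G : list (bool * form V)) : form V :=
  match G with
  | nil => p
  | l :: G' => Or (literal l) (clause p G')
  end.

Lemma peval_clause_or v x p G :
  peval v (clause (Or x p) G) = peval v x || peval v (clause p G).
Proof.
  induction G as [|l G IH]; simpl.
  - destruct (peval v x), (peval v p); reflexivity.
  - rewrite IH; destruct (peval v x), (peval v (literal l)), (peval v (clause p G));
      reflexivity.
Qed.

Lemma clause_shift_taut l p G :
  taut_instance (Iff (clause p (l :: G)) (clause (Or (literal l) p) G)).
Proof.
  intro v; simpl; rewrite peval_clause_or.
  destruct (peval v (literal l)), (peval v (clause p G)); reflexivity.
Qed.

Fixpoint size a : nat :=
  match a with
  | Var _ => 1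
  | Neg b | Box b => S (size b)
  | And b c | Cond b c => S (size b + size c)
  end.

Definition weight (G : list (bool * form V)) : nat :=
  fold_right (fun l n => size (snd l) + n) 0 G.

Definition contradiction p : form V := And p (Neg p).

Lemma L_equiv_cond_clause f : in_L f ->
  forall G p, Forall (fun l => in_L (snd l)) G -> nonmodal p ->
  L_equiv (Cond f (clause p G)).
Proof.
  intros Hf G; induction G as [G IH] using (well_founded_ind (well_founded_ltof _ weight)).
  intros p HG Hp; destruct G as [|[b x] G]; [apply L_equiv_cond_nonmodal; assumption|].
  inversion HG as [|? ? Hx HG']; subst; simpl in Hx.
  unfold ltof in IH; destruct x as [q|y|a c|a|a c]; simpl in IH.
  - apply (L_equiv_cond_taut (clause_shift_taut _ _ _)).
    apply IH; [lia | exact HG' | destruct b; simpl; tauto].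
  - apply (L_equiv_cond_taut (b := clause p ((negb b, y) :: G))); [destruct b; taut|].
    apply IH; [simpl; lia | constructor; assumption | exact Hp].
  - destruct Hx as [Ha Hc]; destruct b.
    + apply (L_equiv_cond_taut
        (b := And (clause p ((true, a) :: G)) (clause p ((true, c) :: G)))); [taut|].
      apply L_equiv_cond_and; apply IH; solve [simpl; lia | constructor; assumption | exact Hp].
    + apply (L_equiv_cond_taut (b := clause p ((false, a) :: (false, c) :: G))); [taut|].
      apply IH; [simpl; lia | repeat constructor; assumption | exact Hp].
  - assert (Ea : L_equiv (Cond f a)).
    { apply (L_equiv_cond_taut (b := clause (contradiction p) ((true, a) :: nil)));
        [unfold contradiction; taut|].
      apply IH; [simpl; lia | repeat constructor; assumption | simpl; tauto]. }
    assert (EG : L_equiv (Cond f (clause p G))) by (apply IH; [lia | exact HG' | exact Hp]).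
    destruct b; [exact (L_equiv_cond_or_box Ea EG) | exact (L_equiv_cond_or_neg_box Ea EG)].
  - destruct Hx.
Qed.

(* [V] may be empty, so a contradictory tail has to be built from a variable
   occurring in the formula at hand. *)
Fixpoint some_var a : V :=
  match a with
  | Var x => x
  | Neg b | Box b | And b _ | Cond b _ => some_var b
  end.

Lemma L_equiv_cond_in_L f psi : in_L f -> in_L psi -> L_equiv (Cond f psi).
Proof.
  intros Hf Hpsi; set (bot := contradiction (Var (some_var psi))).
  apply (L_equiv_cond_taut (b := clause bot ((true, psi) :: nil))); [unfold bot, contradiction; taut|].
  apply L_equiv_cond_clause; [exact Hf | repeat constructor; exact Hpsi | simpl; tauto].
Qed.

Lemma L_equiv_cond a c : L_equiv a -> L_equiv c -> L_equiv (Cond a c).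
Proof.
  intros [a' [Ha Ya]] [c' [Hc Yc]].
  destruct (L_equiv_cond_in_L _ _ Ha Hc) as [chi [Hchi Ychi]]; exists chi; split; [exact Hchi|].
  apply (yalcin_iff_trans (Y_RE Ya (repl_condl c (repl_here _ _)))).
  exact (yalcin_iff_trans (Y_RE Yc (repl_condr a' (repl_here _ _))) Ychi).
Qed.
End YalcinElimination.

Theorem lemma6 (V : Type) (phi : form V) :
  exists phi' : form V, in_L phi' /\ yalcin (Iff phi phi').
Proof.
  change (L_equiv phi).
  induction phi.
  - apply L_equiv_in_L; exact I.
  - apply L_equiv_neg; assumption.
  - apply L_equiv_and; assumption.
  - apply L_equiv_box; assumption.
  - apply L_equiv_cond; assumption.
Qed.
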